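(* Let $M$ be a semigroup and let $f:M^I\to\mathbb N$ be a map such that $f(I)=0$ and $f(m'mm'')\ge f(m)$ for all $m,m',m''\in M^I$. Define $D:\mathrm{Rh}(M^I)\times\mathrm{Rh}(M^I)\to\overline{\mathbb N}$ by $D(\sigma,\tau)=f(\sigma\wedge_{\mathcal L}\tau)$ if $\sigma\ne\tau$ and $D(\sigma,\sigma)=1+\sup f$ (interpreted as $\omega$ if $f$ is unbounded). Then (i) $D$ is a strict length function for $\mathrm{Rh}(M^I)$; (ii) $D=D_\chi$ for some strongly faithful elliptic $\mathrm{Rh}(M^I)$-tree $\chi$, unique up to isomorphism.
   Context: $M^I$ denotes $M$ with a new identity $I$ adjoined (even if $M$ is already a monoid). For a monoid $N$: $a\le_{\mathcal L}b$ iff $a\in Nb$; $a\,\mathcal L\,b$ iff $a\le_{\mathcal L}b$ and $b\le_{\mathcal L}a$; $a<_{\mathcal L}b$ iff $a\le_{\mathcal L}b$ and not $a\,\mathcal L\, b$. The Rhodes expansion $\mathrm{Rh}(N)$ is the set of finite chains $(n_k<_{\mathcal L}\cdots<_{\mathcal L}n_1<_{\mathcal L}n_0=1)$, $k\ge0$, with product $\sigma\tau=\mathrm{lm}(n_kn'_l\le_{\mathcal L}\cdots\le_{\mathcal L}n_1n'_l\le_{\mathcal L}n'_l<_{\mathcal L}\cdots<_{\mathcal L}n'_0=1)$ for $\sigma=(n_k<\cdots<n_0)$, $\tau=(n'_l<\cdots<n'_0)$, where $\mathrm{lm}$ keeps, in each block of $\mathcal L$-equivalent terms, only the leftmost one;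 it is a monoid with identity $(1)$. For $\sigma=(m_k<_{\mathcal L}\cdots<_{\mathcal L}m_0=I)$, $\tau=(m'_l<_{\mathcal L}\cdots<_{\mathcal L}m'_0=I)$ in $\mathrm{Rh}(M^I)$, $\sigma\wedge_{\mathcal L}\tau=m_r$ where $r$ is the largest $i\le\min\{k,l\}$ with $m_j=m'_j$ for $j<i$ and $m_i\,\mathcal L\,m'_i$. Length functions: $D:S\times S\to\mathbb N\cup\{\omega\}$ with (L1) $D(m,m')=D(m',m)$, (L2) $D(m',m'')\le D(m,m)$, (L3) $D(m',m'')\le D(m'm,m''m)$, (L4) $D(m,m'')\ge\min\{D(m,m'),D(m',m'')\}$; strict: (L5) $D(m',m'')=D(m,m)\Rightarrow m'=m''$. Elliptic $S$-tree $\chi=(r_0,T,\alpha,\theta)$: uniform rooted tree (all maximal rays have the same length), maximal ray $\alpha$, monoid homomorphism $\theta$ from $S$ to the depth-preserving distance-non-increasing self-maps of the vertex set, with $\mathrm{Vert}(T)=\bigcup_i\alpha_iS$; strongly faithful if $\alpha s=\alpha s'\Rightarrow s=s'$; $D_\chi(s,s')=|\alpha s\wedge\alpha s'|$ (length of the longest common initial segment of the rays). Isomorphism: bijective elliptic contraction preserving the distinguished ray and commuting with the actions. *)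

From Stdlib Require Import List Arith Lia ClassicalEpsilon.
Import ListNotations.
Set Implicit Arguments.

Inductive natw : Type := Fin (n : nat) | Omega.

Definition lew (x y : natw) : Prop :=
  match x, y with
  | Fin a, Fin b => a <= b
  | _, Omega => True
  | Omega, Fin _ => False
  end.

Definition minw (x y : natw) : natw :=
  match x, y with
  | Fin a, Fin b => Fin (Nat.min a b)
  | Fin a, Omega => Fin a
  | Omega, y => y
  end.

Definition succw (x : natw) : natw :=
  match x with Fin a => Fin (S a) | Omega => Omega end.

(* least upper bound in N ∪ {ω} (always exists); chosen by classical epsilon *)
Definition is_lubw (P : natw -> Prop) (x : natw) : Prop :=
  (forall y, P y -> lew y x) /\ (forall z, (forall y, P y -> lew y z) -> lew x z).
Definition lubw (P : natw -> Prop) : natw := epsilon (inhabits Omega) (is_lubw P).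

Definition dec (P : Prop) : bool :=
  if excluded_middle_informative P then true else false.

Record Semigroup : Type := {
  sg_car :> Type;
  sg_mul : sg_car -> sg_car -> sg_car;
  sg_assoc : forall x y z, sg_mul x (sg_mul y z) = sg_mul (sg_mul x y) z }.

(* M^I : M with a new identity I adjoined; I is represented by None *)
Definition MI (M : Semigroup) : Type := option M.
Definition I_ {M : Semigroup} : MI M := None.

Definition mulI {M : Semigroup} (x y : MI M) : MI M :=
  match x, y with
  | None, _ => y
  | _, None => x
  | Some a, Some b => Some (sg_mul M a b)
  end.

Definition leL {M : Semigroup} (a b : MI M) : Prop := exists c, a = mulI c b.
Definition eqL {M : Semigroup} (a b : MI M) : Prop := leL a b /\ leL b a.
Definition ltL {M : Semigroup} (a b : MI M) : Prop := leL a b /\ ~ eqL a b.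

(* ---------- Rhodes expansion Rh(M^I) ----------
   A chain (n_k <_L ... <_L n_1 <_L n_0 = I) is represented by the list
   [n_0; n_1; ...; n_k] (top element first). *)
Fixpoint schain {M : Semigroup} (l : list (MI M)) : Prop :=
  match l with
  | x :: ((y :: _) as r) => ltL y x /\ schain r
  | _ => True
  end.

Definition is_Rh {M : Semigroup} (l : list (MI M)) : Prop :=
  (exists t, l = I_ :: t) /\ schain l.

Definition Rh (M : Semigroup) : Type := { l : list (MI M) | is_Rh l }.

(* lm: in each block of consecutive L-equivalent terms keep only the leftmost
   one in the paper's (bottom-first) notation, i.e. the last one in our
   top-first list. *)
Fixpoint lm {M : Semigroup} (l : list (MI M)) : list (MI M) :=
  match l with
  | x :: ((y :: _) as r) => if dec (eqL x y) then lm r else x :: lm r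
  | _ => l
  end.

(* the list (n'_0 , ..., n'_l , n_1 n'_l , ..., n_k n'_l) (top first), then lm *)
Definition Rh_prod_list {M : Semigroup} (s t : list (MI M)) : list (MI M) :=
  lm (t ++ map (fun x => mulI x (last t I_)) (tl s)).

Lemma mulI_assoc (M : Semigroup) (x y z : MI M) :
  mulI x (mulI y z) = mulI (mulI x y) z.
Proof.
  destruct x as [x|], y as [y|], z as [z|]; simpl; try reflexivity.
  rewrite sg_assoc; reflexivity.
Qed.

Lemma leL_refl (M : Semigroup) (a : MI M) : leL a a.
Proof. exists None; destruct a; reflexivity. Qed.

Lemma leL_trans (M : Semigroup) (a b c : MI M) : leL a b -> leL b c -> leL a c.
Proof.
  intros [x Hx] [y Hy]; exists (mulI x y); subst; apply mulI_assoc.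
Qed.

Lemma eqL_sym (M : Semigroup) (a b : MI M) : eqL a b -> eqL b a.
Proof. intros [H1 H2]; split; assumption. Qed.

Lemma eqL_trans (M : Semigroup) (a b c : MI M) : eqL a b -> eqL b c -> eqL a c.
Proof.
  intros [H1 H2] [H3 H4]; split; eapply leL_trans; eassumption.
Qed.

Lemma eqL_I (M : Semigroup) (x : MI M) : eqL x I_ -> x = I_.
Proof.
  intros [_ [c Hc]]. destruct c, x; simpl in Hc; try discriminate; reflexivity.
Qed.

Fixpoint wchain {M : Semigroup} (l : list (MI M)) : Prop :=
  match l with
  | x :: ((y :: _) as r) => leL y x /\ wchain r
  | _ => True
  end.

Lemma lm_spec (M : Semigroup) (l : list (MI M)) :
  wchain l -> schain (lm l) /\
  (forall x t, l = x :: t -> exists h t', lm l = h :: t' /\ eqL h x).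
Proof.
  induction l as [|x r IH].
  - intros _; split; [exact I| intros x t H; discriminate].
  - destruct r as [|y r'].
    + intros _; split; [exact I|].
      intros x0 t H; injection H as <- <-; exists x, []; split;
        [reflexivity| split; apply leL_refl].
    + intros [Hyx Hw]. destruct (IH Hw) as [Hs Hh].
      destruct (Hh y r' eq_refl) as [h [t' [Ht' Hhy]]].
      split.
      * change (schain (if dec (eqL x y) then lm (y :: r') else x :: lm (y :: r'))).
        unfold dec; destruct (excluded_middle_informative (eqL x y)) as [E|E].
        -- exact Hs.
        -- rewrite Ht' in *. simpl. split; [|exact Hs]. split.
           ++ eapply leL_trans; [apply Hhy|exact Hyx].
           ++ intros Hhx. apply E. eapply eqL_trans; [apply eqL_sym; exact Hhx| exact Hhy].
      * intros x0 t H; injection H as <- <-.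
        change (exists h0 t0, (if dec (eqL x y) then lm (y :: r') else x :: lm (y :: r'))
                 = h0 :: t0 /\ eqL h0 x).
        unfold dec; destruct (excluded_middle_informative (eqL x y)) as [E|E].
        -- exists h, t'; split; [exact Ht'|].
           eapply eqL_trans; [exact Hhy| apply eqL_sym; exact E].
        -- exists x, (lm (y :: r')); split; [reflexivity| split; apply leL_refl].
Qed.

Lemma schain_wchain (M : Semigroup) (l : list (MI M)) : schain l -> wchain l.
Proof.
  induction l as [|x r IH]; [auto|].
  destruct r as [|y r']; [auto|].
  intros [[H _] Hs]; split; [exact H| apply IH; exact Hs].
Qed.

Lemma wchain_tl (M : Semigroup) (l : list (MI M)) : wchain l -> wchain (tl l).
Proof. destruct l as [|x [|y r]]; simpl; tauto. Qed.

Lemma wchain_map (M : Semigroup) (t : MI M) (l : list (MI M)) :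
  wchain l -> wchain (map (fun x => mulI x t) l).
Proof.
  induction l as [|x r IH]; [auto|].
  destruct r as [|y r']; [simpl; auto|].
  intros [[c Hc] Hw]. split.
  - exists c. rewrite Hc. symmetry; apply mulI_assoc.
  - apply IH; exact Hw.
Qed.

Lemma wchain_app (M : Semigroup) (a b : list (MI M)) (d : MI M) :
  a <> [] -> wchain a -> wchain b ->
  (match b with y :: _ => leL y (last a d) | [] => True end) ->
  wchain (a ++ b).
Proof.
  induction a as [|x a' IH]; [intros H; contradiction H; reflexivity|].
  intros _ Ha Hb Hj. destruct a' as [|x' a''].
  - simpl in *. destruct b as [|y b']; [exact I| split; assumption].
  - destruct Ha as [H1 H2]. change (wchain (x :: ((x' :: a'') ++ b))).
    simpl. split; [exact H1|]. apply IH; [discriminate|exact H2|exact Hb|exact Hj].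
Qed.

Lemma Rh_prod_ok (M : Semigroup) (s t : list (MI M)) :
  is_Rh s -> is_Rh t -> is_Rh (Rh_prod_list s t).
Proof.
  intros [_ Hs] [[t0 Ht] Htc].
  assert (W : wchain (t ++ map (fun x => mulI x (last t I_)) (tl s))).
  { apply wchain_app with (d := I_).
    - rewrite Ht; discriminate.
    - apply schain_wchain; exact Htc.
    - apply wchain_map, wchain_tl, schain_wchain; exact Hs.
    - destruct (tl s) as [|y r]; [exact I|]. simpl. exists y; reflexivity. }
  destruct (lm_spec _ W) as [Hc Hh].
  rewrite Ht in Hh. simpl in Hh.
  destruct (Hh I_ _ eq_refl) as [h [t' [E Hhi]]].
  apply eqL_I in Hhi. subst h.
  split; [exists t'; rewrite Ht; exact E| exact Hc].
Qed.

Definition Rh_mul (M : Semigroup) (s t : Rh M) : Rh M :=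
  exist _ (Rh_prod_list (proj1_sig s) (proj1_sig t))
        (Rh_prod_ok (proj2_sig s) (proj2_sig t)).

Lemma Rh_one_ok (M : Semigroup) : @is_Rh M [I_].
Proof. split; [exists []; reflexivity| exact I]. Qed.

Definition Rh_one (M : Semigroup) : Rh M := exist _ [I_] (Rh_one_ok M).

Definition meet_pred {M : Semigroup} (s t : list (MI M)) (r : nat) : Prop :=
  r < length s /\ r < length t /\
  (forall j, j < r -> nth j s I_ = nth j t I_) /\ eqL (nth r s I_) (nth r t I_).

Definition meet_index {M : Semigroup} (s t : list (MI M)) : nat :=
  epsilon (inhabits 0)
    (fun r => meet_pred s t r /\ forall r', meet_pred s t r' -> r' <= r).

Definition meetL {M : Semigroup} (s t : Rh M) : MI M :=
  nth (meet_index (proj1_sig s) (proj1_sig t)) (proj1_sig s) I_.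

Definition supw {X : Type} (f : X -> nat) : natw :=
  lubw (fun y => exists x, y = Fin (f x)).

Definition Dfun {M : Semigroup} (f : MI M -> nat) (s t : Rh M) : natw :=
  if dec (s = t) then succw (supw f) else Fin (f (meetL s t)).

Definition is_length_function {S : Type} (mul : S -> S -> S) (D : S -> S -> natw) : Prop :=
  (forall m m', D m m' = D m' m) /\                                   (* L1 *)
  (forall m m' m'', lew (D m' m'') (D m m)) /\                        (* L2 *)
  (forall m m' m'', lew (D m' m'') (D (mul m' m) (mul m'' m))) /\     (* L3 *)
  (forall m m' m'', lew (minw (D m m') (D m' m'')) (D m m'')).        (* L4 *)

Definition is_strict_length_function {S : Type} (mul : S -> S -> S) (D : S -> S -> natw) : Prop :=
  is_length_function mul D /\
  (forall m m' m'', D m' m'' = D m m -> m' = m'').                    (* L5 *)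

(* ---------- rooted trees ----------
   A rooted tree is given by its vertex type, root, parent map and depth;
   edges are {v, par v} for v <> root. *)
Record rtree : Type := {
  vert : Type;
  root : vert;
  par : vert -> vert;
  depth : vert -> nat;
  par_root : par root = root;
  depth_root : depth root = 0;
  depth_par : forall v, v <> root -> depth v = S (depth (par v)) }.

(* graph distance d(u,v) <= n *)
Definition dist_le (T : rtree) (u v : vert T) (n : nat) : Prop :=
  exists a b, a + b <= n /\ Nat.iter a (par T) u = Nat.iter b (par T) v.

Definition depth_pres (T1 T2 : rtree) (g : vert T1 -> vert T2) : Prop :=
  forall v, depth T2 (g v) = depth T1 v.

Definition dist_noninc (T1 T2 : rtree) (g : vert T1 -> vert T2) : Prop :=
  forall u v n, dist_le T1 u v n -> dist_le T2 (g u) (g v) n.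

(* a ray from the root of length len (alpha_0 = root, alpha_{i+1} child of alpha_i) *)
Definition is_ray (T : rtree) (len : natw) (a : nat -> vert T) : Prop :=
  a 0 = root T /\
  forall i, lew (Fin (S i)) len -> par T (a (S i)) = a i /\ a (S i) <> root T.

Definition is_maxray (T : rtree) (len : natw) (a : nat -> vert T) : Prop :=
  is_ray T len a /\
  forall len' a', is_ray T len' a' -> (forall i, lew (Fin i) len -> a' i = a i) ->
                  lew len' len.

Definition uniform (T : rtree) : Prop :=
  forall l1 a1 l2 a2, is_maxray T l1 a1 -> is_maxray T l2 a2 -> l1 = l2.

Record etree {S : Type} (mul : S -> S -> S) (one : S) : Type := {
  et_T : rtree;
  et_uniform : uniform et_T;
  et_len : natw;
  et_ray : nat -> vert et_T;                       (* alpha *)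
  et_ray_max : is_maxray et_T et_len et_ray;
  et_act : vert et_T -> S -> vert et_T;
  et_act_one : forall v, et_act v one = v;
  et_act_mul : forall v s t, et_act v (mul s t) = et_act (et_act v s) t;
  et_act_depth : forall s, depth_pres et_T et_T (fun v => et_act v s);
  et_act_dist : forall s, dist_noninc et_T et_T (fun v => et_act v s);
  et_vert : forall v, exists i s, lew (Fin i) et_len /\ v = et_act (et_ray i) s }.

Definition strongly_faithful {S : Type} {mul : S -> S -> S} {one : S}
  (chi : etree mul one) : Prop :=
  forall s s', (forall i, lew (Fin i) (et_len chi) ->
                 et_act chi (et_ray chi i) s = et_act chi (et_ray chi i) s') -> s = s'.

(* D_chi(s,s') = |alpha s ∧ alpha s'| *)
Definition Dchi {S : Type} {mul : S -> S -> S} {one : S}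
  (chi : etree mul one) (s s' : S) : natw :=
  lubw (fun y => exists i, y = Fin i /\ lew (Fin i) (et_len chi) /\
          forall j, j <= i -> et_act chi (et_ray chi j) s = et_act chi (et_ray chi j) s').

Definition etree_iso {S : Type} {mul : S -> S -> S} {one : S}
  (chi1 chi2 : etree mul one) : Prop :=
  exists phi : vert (et_T chi1) -> vert (et_T chi2),
    (forall x y, phi x = phi y -> x = y) /\
    (forall y, exists x, phi x = y) /\
    depth_pres (et_T chi1) (et_T chi2) phi /\
    dist_noninc (et_T chi1) (et_T chi2) phi /\
    (forall i, lew (Fin i) (et_len chi1) -> phi (et_ray chi1 i) = et_ray chi2 i) /\
    (forall v s, phi (et_act chi1 v s) = et_act chi2 (phi v) s).

From Stdlib Require Import List Arith Lia Wf_nat ClassicalEpsilon ProofIrrelevance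
  FunctionalExtensionality PropExtensionality Classical.
Import ListNotations.

(** The relations "[Fin i <= D s t]" are right-compatible
      equivalences; their classes at level [i] are the vertices of depth [i] of a
      tree [chi] on which [A] acts on the right, and [D_chi = D].  Conversely, in
      any elliptic tree [chi'] with [D_chi' = D] the vertex [alpha_i s] is
      determined by the class of [s] at level [i], which yields the isomorphism.
      Strictness of [D] gives strong faithfulness. *)

Lemma dec_true (P : Prop) : P -> dec P = true.
Proof. intro H; unfold dec; destruct (excluded_middle_informative P); tauto. Qed.

Lemma dec_false (P : Prop) : ~ P -> dec P = false.
Proof. intro H; unfold dec; destruct (excluded_middle_informative P); tauto. Qed.

Lemma dec_iff (P Q : Prop) : (P <-> Q) -> dec P = dec Q.
Proof.
  intro H; destruct (classic P).
  - rewrite !dec_true; tauto.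
  - rewrite !dec_false; tauto.
Qed.

Lemma lew_refl (x : natw) : lew x x.
Proof. destruct x; simpl; auto. Qed.

Lemma lew_trans (x y z : natw) : lew x y -> lew y z -> lew x z.
Proof. destruct x, y, z; simpl; intros; try lia; tauto. Qed.

Lemma lew_antisym (x y : natw) : lew x y -> lew y x -> x = y.
Proof. destruct x, y; simpl; intros; try tauto. f_equal; lia. Qed.

Lemma lew_0 (x : natw) : lew (Fin 0) x.
Proof. destruct x; simpl; auto; lia. Qed.

Lemma lew_Fin_le (i j : nat) (x : natw) : j <= i -> lew (Fin i) x -> lew (Fin j) x.
Proof. destruct x; simpl; auto; lia. Qed.

Lemma lew_minw (i : nat) (x y : natw) :
  lew (Fin i) x -> lew (Fin i) y -> lew (Fin i) (minw x y).
Proof. destruct x, y; simpl; auto; lia. Qed.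

Lemma minw_le_l (x y : natw) : lew (minw x y) x.
Proof. destruct x, y; simpl; auto; lia. Qed.

Lemma minw_le_r (x y : natw) : lew (minw x y) y.
Proof. destruct x, y; simpl; auto; lia. Qed.

Lemma natw_ext (x y : natw) :
  (forall i, lew (Fin i) x <-> lew (Fin i) y) -> x = y.
Proof.
  intro H; destruct x as [a|], y as [b|]; auto.
  - f_equal; apply Nat.le_antisymm; [apply (H a) | apply (H b)]; simpl; lia.
  - pose proof (proj2 (H (S a)) I); simpl in *; lia.
  - pose proof (proj1 (H (S b)) I); simpl in *; lia.
Qed.

(** Every subset of [N ∪ {ω}] has a least upper bound: the least finite
    upper bound if there is one, [ω] otherwise. *)
Lemma lubw_exists (P : natw -> Prop) : exists x, is_lubw P x.
Proof.
  destruct (classic (exists n, forall y, P y -> lew y (Fin n))) as [Hb|Nb].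
  - destruct (dec_inh_nat_subset_has_unique_least_element
                (fun n => forall y, P y -> lew y (Fin n)) (fun n => classic _) Hb)
      as [m [[Hm Hmin] _]].
    exists (Fin m); split; [exact Hm|].
    intros [k|] Hz; [apply Hmin, Hz | exact I].
  - exists Omega; split; [intros [] _; exact I|].
    intros [k|] Hz; [exfalso; apply Nb; exists k; exact Hz | exact I].
Qed.

Lemma lubw_spec (P : natw -> Prop) : is_lubw P (lubw P).
Proof. unfold lubw; apply epsilon_spec, lubw_exists. Qed.

Lemma lubw_down_closed (Q : nat -> Prop) (i : nat) :
  Q 0 -> (forall j k, k <= j -> Q j -> Q k) ->
  (lew (Fin i) (lubw (fun y => exists j, y = Fin j /\ Q j)) <-> Q i).
Proof.
  intros Q0 Qdc. destruct (lubw_spec (fun y => exists j, y = Fin j /\ Q j)) as [Hub Hleast].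
  split.
  - intro Hi. apply NNPP; intro NQ.
    assert (Hb : lew (lubw (fun y => exists j, y = Fin j /\ Q j)) (Fin (pred i))).
    { apply Hleast. intros y [j [-> Qj]]. simpl.
      destruct (le_lt_dec i j) as [Hij|Hij]; [exfalso; apply NQ, (Qdc j i Hij Qj) | lia]. }
    pose proof (lew_trans _ _ _ Hi Hb) as H; simpl in H.
    destruct i; [exact (NQ Q0) | lia].
  - intro Qi. apply Hub. exists i; split; [reflexivity | exact Qi].
Qed.

Section GreenL.
Context {M : Semigroup}.

Lemma mulI_I_r (x : MI M) : mulI x I_ = x.
Proof. destruct x; reflexivity. Qed.

Lemma eqL_refl (a : MI M) : eqL a a.
Proof. split; apply leL_refl. Qed.

Lemma leL_mulr (a b p : MI M) : leL a b -> leL (mulI a p) (mulI b p).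
Proof. intros [c Hc]; exists c; rewrite Hc; symmetry; apply mulI_assoc. Qed.

Lemma eqL_mulr (a b p : MI M) : eqL a b -> eqL (mulI a p) (mulI b p).
Proof. intros [H1 H2]; split; apply leL_mulr; assumption. Qed.

(** Nothing other than [I] lies L-above [I]: [I <=_L x] forces [x = I].
    Hence [I] appears in an element of [Rh(M^I)] only at its top. *)
Lemma leL_I (x : MI M) : leL I_ x -> x = I_.
Proof. intros [c Hc]; destruct c, x; simpl in Hc; try discriminate; reflexivity. Qed.

End GreenL.

(** The facts below say that
    [lm] is an idempotent operator compatible with concatenation (on either
    side) and with right translation; they give associativity of [Rh_mul]. *)

Section Leftmost.
Context {M : Semigroup}.

Definition cons_lm (x : MI M) (l : list (MI M)) : list (MI M) :=
  match l with [] => [x] | h :: _ => if dec (eqL x h) then l else x :: l end.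

Lemma lm_head (x : MI M) (z : list (MI M)) :
  exists h t, lm (x :: z) = h :: t /\ eqL h x.
Proof.
  revert x; induction z as [|y z IH]; intro x.
  - exists x, []; split; [reflexivity | apply eqL_refl].
  - destruct (IH y) as [h [t [E Hh]]].
    change (exists h0 t0, (if dec (eqL x y) then lm (y :: z) else x :: lm (y :: z))
                          = h0 :: t0 /\ eqL h0 x).
    destruct (classic (eqL x y)) as [Y|N].
    + rewrite dec_true by exact Y. exists h, t; split; [exact E|].
      eapply eqL_trans; [exact Hh | apply eqL_sym; exact Y].
    + rewrite dec_false by exact N. exists x, (lm (y :: z)).
      split; [reflexivity | apply eqL_refl].
Qed.

Lemma lm_cons (x : MI M) (z : list (MI M)) : lm (x :: z) = cons_lm x (lm z).
Proof.
  destruct z as [|y z]; [reflexivity|].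
  destruct (lm_head y z) as [h [t [E Hh]]].
  change ((if dec (eqL x y) then lm (y :: z) else x :: lm (y :: z))
          = cons_lm x (lm (y :: z))).
  rewrite E; simpl. rewrite (dec_iff (eqL x y) (eqL x h)); [reflexivity|].
  split; intro H; eapply eqL_trans; eauto using eqL_sym.
Qed.

Lemma lm_idem (l : list (MI M)) : lm (lm l) = lm l.
Proof.
  induction l as [|x l IH]; [reflexivity|].
  rewrite lm_cons. destruct (lm l) as [|h t]; [reflexivity|]. simpl.
  destruct (classic (eqL x h)) as [Y|N].
  - rewrite dec_true by exact Y. exact IH.
  - rewrite dec_false by exact N. rewrite lm_cons, IH. simpl.
    rewrite dec_false by exact N. reflexivity.
Qed.

Lemma lm_app (a b : list (MI M)) : lm (a ++ b) = lm (a ++ lm b).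
Proof.
  induction a as [|x a IH].
  - symmetry; apply lm_idem.
  - rewrite <- !app_comm_cons, !(lm_cons x), IH; reflexivity.
Qed.

(** Reducing a prefix first does not change the reduction either: a term
    absorbed into the head [h] of [lm a] is still absorbed after appending
    [b], since the head of [lm (h :: _)] stays L-equivalent to [h]. *)
Lemma lm_app_l (a b : list (MI M)) : lm (a ++ b) = lm (lm a ++ b).
Proof.
  induction a as [|x a IH]; [reflexivity|].
  rewrite <- app_comm_cons, lm_cons, IH, (lm_cons x a).
  destruct (lm a) as [|h t]; [cbn [cons_lm app]; rewrite (lm_cons x b); reflexivity|].
  cbn [cons_lm]. destruct (classic (eqL x h)) as [Y|N].
  - rewrite dec_true by exact Y.
    destruct (lm_head h (t ++ b)) as [h' [t' [E Hh]]].
    change (lm ((h :: t) ++ b)) with (lm (h :: t ++ b)). rewrite E. simpl.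
    rewrite dec_true; [reflexivity|].
    eapply eqL_trans; [exact Y | apply eqL_sym; exact Hh].
  - rewrite dec_false by exact N. rewrite <- (app_comm_cons (h :: t)), (lm_cons x).
    reflexivity.
Qed.

(** Right translation preserves L-equivalence, so it commutes with [lm] up to
    a further reduction. *)
Lemma lm_map (p : MI M) (l : list (MI M)) :
  lm (map (fun x => mulI x p) (lm l)) = lm (map (fun x => mulI x p) l).
Proof.
  induction l as [|x l IH]; [reflexivity|].
  rewrite lm_cons. simpl map at 2. rewrite (lm_cons (mulI x p)), <- IH.
  destruct (lm l) as [|h t]; [reflexivity|].
  cbn [cons_lm]. destruct (classic (eqL x h)) as [Y|N].
  - rewrite dec_true by exact Y.
    destruct (lm_head (mulI h p) (map (fun y => mulI y p) t)) as [h' [t' [E Hh]]].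
    cbn [map]. rewrite E. cbn [cons_lm]. rewrite dec_true; [reflexivity|].
    eapply eqL_trans; [apply eqL_mulr; exact Y | apply eqL_sym; exact Hh].
  - rewrite dec_false by exact N. cbn [map]. rewrite (lm_cons (mulI x p)). reflexivity.
Qed.

Lemma lm_schain (l : list (MI M)) : schain l -> lm l = l.
Proof.
  induction l as [|x l IH]; [reflexivity|].
  intro H. rewrite lm_cons, IH by (destruct l; simpl in *; tauto).
  destruct l as [|y l]; [reflexivity|].
  simpl. destruct H as [[_ N] _]. rewrite dec_false; [reflexivity|].
  intro E; apply N, eqL_sym, E.
Qed.

Lemma lm_last (l : list (MI M)) (d : MI M) : l <> [] -> last (lm l) d = last l d.
Proof.
  induction l as [|x l IH]; [tauto|]. intros _.
  rewrite lm_cons. destruct l as [|y l]; [reflexivity|].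
  destruct (lm_head y l) as [h [t [E _]]]. rewrite E. rewrite E in IH.
  simpl cons_lm. change (last (x :: y :: l) d) with (last (y :: l) d).
  rewrite <- IH by discriminate.
  destruct (dec (eqL x h)); reflexivity.
Qed.

(** Lists avoiding the identity [I]; these are the tails of elements of
    [Rh(M^I)], and they are stable under [lm] and right translation. *)
Definition nonI (l : list (MI M)) : Prop := Forall (fun x => x <> I_) l.

Lemma lm_nonI (l : list (MI M)) : nonI l -> nonI (lm l).
Proof.
  induction 1 as [|x l Hx _ IH]; [constructor|].
  rewrite lm_cons. destruct (lm l) as [|h t]; simpl.
  - constructor; auto.
  - destruct (dec (eqL x h)); [exact IH | constructor; auto].
Qed.

Lemma map_nonI (p : MI M) (l : list (MI M)) :
  nonI l -> nonI (map (fun x => mulI x p) l).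
Proof.
  induction 1; constructor; auto. destruct x; [|tauto]. destruct p; discriminate.
Qed.

(** The identity is never L-equivalent to another element, so [lm] keeps a
    leading [I]. *)
Lemma lm_I_cons (l : list (MI M)) : nonI l -> lm (I_ :: l) = I_ :: lm l.
Proof.
  intro H. rewrite lm_cons. apply lm_nonI in H. destruct (lm l) as [|h t]; [reflexivity|].
  simpl. inversion H; subst. rewrite dec_false; [reflexivity|].
  intro E. apply H2, eqL_I, eqL_sym, E.
Qed.

Lemma schain_nonI (x : MI M) (l : list (MI M)) : schain (x :: l) -> nonI l.
Proof.
  revert x; induction l as [|y l IH]; intros x H; constructor.
  - destruct H as [[Hle Hne] _]. intro E; subst. apply leL_I in Hle. subst.
    apply Hne, eqL_refl.
  - eapply IH, (proj2 H).
Qed.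

End Leftmost.

(** * [Rh(M^I)] is a monoid *)

Section RhodesMonoid.
Context {M : Semigroup}.

Lemma Rh_eq (s t : Rh M) : proj1_sig s = proj1_sig t -> s = t.
Proof.
  destruct s as [l Hl], t as [l' Hl']; simpl; intro E; subst.
  f_equal; apply proof_irrelevance.
Qed.

Lemma Rh_shape (s : Rh M) :
  proj1_sig s = I_ :: tl (proj1_sig s) /\ nonI (tl (proj1_sig s)).
Proof.
  destruct s as [l [[t E] Hs]]; simpl; subst.
  split; [reflexivity | eapply schain_nonI; exact Hs].
Qed.

(** [(1)] is a two-sided identity: multiplying by it only re-reduces an
    already strict chain. *)
Lemma Rh_mul_one_r (s : Rh M) : Rh_mul s (Rh_one M) = s.
Proof.
  apply Rh_eq.
  change (lm (I_ :: map (fun x => mulI x I_) (tl (proj1_sig s))) = proj1_sig s).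
  rewrite (map_ext _ (fun x => x) mulI_I_r), map_id, <- (proj1 (Rh_shape s)).
  apply lm_schain, (proj2_sig s).
Qed.

Lemma Rh_mul_one_l (s : Rh M) : Rh_mul (Rh_one M) s = s.
Proof.
  apply Rh_eq. change (lm (proj1_sig s ++ []) = proj1_sig s).
  rewrite app_nil_r. apply lm_schain, (proj2_sig s).
Qed.

Lemma last_translate (u t' : list (MI M)) :
  last (u ++ map (fun x => mulI x (last u I_)) t') I_ = mulI (last (I_ :: t') I_) (last u I_).
Proof.
  destruct t' as [|y t''] using rev_ind.
  - rewrite app_nil_r. reflexivity.
  - rewrite map_app, app_assoc. simpl map. rewrite last_last.
    change (I_ :: t'' ++ [y]) with ((I_ :: t'') ++ [y]). rewrite last_last. reflexivity.
Qed.

(** Associativity: both sides reduce to [lm (u ++ t'·p ++ s'·(q·p))], where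
    [s = I :: s'], [t = I :: t'], [q] is the last term of [t] and [p] that of
    [u]. *)
Lemma Rh_mul_assoc (s t u : Rh M) : Rh_mul (Rh_mul s t) u = Rh_mul s (Rh_mul t u).
Proof.
  apply Rh_eq. cbn [Rh_mul proj1_sig]. unfold Rh_prod_list.
  destruct (Rh_shape s) as [_ Ns], (Rh_shape t) as [Et Nt].
  set (S' := tl (proj1_sig s)) in *. set (T' := tl (proj1_sig t)) in *.
  set (U := proj1_sig u). rewrite Et.
  set (q := last (I_ :: T') I_). set (p := last U I_).
  rewrite <- app_comm_cons, lm_I_cons
    by (apply Forall_app; split; [exact Nt | apply map_nonI, Ns]).
  simpl tl.
  rewrite lm_app, lm_map, <- lm_app, map_app, app_assoc, <- (lm_app_l (U ++ _)).
  rewrite lm_last by (unfold U; rewrite (proj1 (Rh_shape u)); discriminate).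
  unfold p. rewrite last_translate, map_map. fold p.
  do 2 f_equal. apply map_ext. intro x. symmetry. apply mulI_assoc.
Qed.

End RhodesMonoid.

Lemma bounded_max (P : nat -> Prop) (n : nat) :
  (forall r, P r -> r < n) -> (exists r, P r) ->
  exists r, P r /\ forall r', P r' -> r' <= r.
Proof.
  revert P; induction n as [|n IH]; intros P Hb [r Pr].
  - specialize (Hb r Pr); lia.
  - destruct (classic (P n)) as [Pn|NPn].
    + exists n; split; [exact Pn|]. intros r' Pr'. specialize (Hb r' Pr'); lia.
    + apply IH; [|exists r; exact Pr].
      intros r' Pr'. specialize (Hb r' Pr'). destruct (Nat.eq_dec r' n); [subst; tauto | lia].
Qed.

Section Meets.
Context {M : Semigroup}.

(** The meet index of two elements of [Rh(M^I)] is the largest index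
    satisfying [meet_pred]; index [0] always does, both chains starting at [I]. *)
Lemma meet_index_max (s t : Rh M) :
  meet_pred (proj1_sig s) (proj1_sig t) (meet_index (proj1_sig s) (proj1_sig t)) /\
  forall r, meet_pred (proj1_sig s) (proj1_sig t) r ->
            r <= meet_index (proj1_sig s) (proj1_sig t).
Proof.
  unfold meet_index. apply epsilon_spec, (bounded_max _ (length (proj1_sig s))).
  - intros r [H _]; exact H.
  - exists 0. rewrite (proj1 (Rh_shape s)), (proj1 (Rh_shape t)).
    repeat split; simpl; try lia; apply eqL_refl.
Qed.

Lemma meet_pred_sym (s t : list (MI M)) (r : nat) : meet_pred s t r -> meet_pred t s r.
Proof.
  intros [H1 [H2 [H3 H4]]]. split; [exact H2|]. split; [exact H1|].
  split; [intros j Hj; symmetry; apply H3, Hj | apply eqL_sym, H4].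
Qed.

Lemma schain_mono (l : list (MI M)) (i j : nat) :
  schain l -> i <= j -> j < length l -> leL (nth j l I_) (nth i l I_).
Proof.
  revert i j; induction l as [|x l IH]; intros i j Hs Hij Hj; [simpl in Hj; lia|].
  destruct j as [|j]; [replace i with 0 by lia; apply leL_refl|].
  destruct l as [|y l]; [simpl in Hj; lia|].
  assert (Hy : leL (nth j (y :: l) I_) y)
    by (apply (IH 0 j); [exact (proj2 Hs) | lia | simpl in *; lia]).
  destruct i as [|i].
  - exact (leL_trans Hy (proj1 (proj1 Hs))).
  - apply IH; [exact (proj2 Hs) | lia | simpl in *; lia].
Qed.

Lemma cons_lm_meet_pred (x : MI M) (l1 l2 : list (MI M)) (k : nat) :
  meet_pred l1 l2 k -> exists k', meet_pred (cons_lm x l1) (cons_lm x l2) k' /\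
    nth k' (cons_lm x l1) I_ = nth k l1 I_.
Proof.
  intros [H1 [H2 [H3 H4]]].
  destruct l1 as [|h1 t1]; [simpl in H1; lia|]. destruct l2 as [|h2 t2]; [simpl in H2; lia|].
  assert (Eh : eqL h1 h2).
  { destruct k as [|k]; [exact H4|]. pose proof (H3 0 ltac:(lia)) as E0; simpl in E0.
    rewrite E0; apply eqL_refl. }
  cbn [cons_lm].
  rewrite (dec_iff (eqL x h2) (eqL x h1))
    by (split; intro E; eapply eqL_trans; eauto using eqL_sym).
  destruct (dec (eqL x h1)).
  - exists k; split; [exact (conj H1 (conj H2 (conj H3 H4))) | reflexivity].
  - exists (S k); split; [|reflexivity].
    split; [simpl in *; lia|]. split; [simpl in *; lia|]. split; [|exact H4].
    intros [|j] Hj; [reflexivity|]. simpl. apply H3; lia.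
Qed.

Lemma lm_meet_pred (l1 l2 : list (MI M)) (R : nat) :
  meet_pred l1 l2 R -> exists R', meet_pred (lm l1) (lm l2) R' /\
    leL (nth R' (lm l1) I_) (nth R l1 I_).
Proof.
  revert l2 R; induction l1 as [|x r1 IH]; intros l2 R [H1 [H2 [H3 H4]]];
    [simpl in H1; lia|].
  destruct l2 as [|y r2]; [simpl in H2; lia|].
  destruct R as [|R].
  - destruct (lm_head x r1) as [a [ta [Ea Ha]]], (lm_head y r2) as [b [tb [Eb Hb]]].
    exists 0. rewrite Ea, Eb. split; [|apply Ha].
    split; [simpl; lia|]. split; [simpl; lia|]. split; [intros; lia|].
    eapply eqL_trans; [exact Ha | eapply eqL_trans; [exact H4 | apply eqL_sym, Hb]].
  - assert (Exy : x = y) by exact (H3 0 ltac:(lia)). subst y.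
    destruct (IH r2 R) as [R0 [HP HL]].
    { split; [simpl in *; lia|]. split; [simpl in *; lia|].
      split; [intros j Hj; exact (H3 (S j) ltac:(lia)) | exact H4]. }
    rewrite !(lm_cons x). destruct (cons_lm_meet_pred x _ _ _ HP) as [k' [Hk Ek]].
    exists k'; split; [exact Hk|]. rewrite Ek. exact HL.
Qed.

Lemma nth_translate (u s : list (MI M)) (p : MI M) (j : nat) :
  j < length s -> nth (length u + j) (u ++ map (fun x => mulI x p) s) I_ = mulI (nth j s I_) p.
Proof.
  intro Hj. rewrite app_nth2_plus, (nth_indep _ I_ (mulI I_ p)) by (rewrite length_map; exact Hj).
  exact (map_nth (fun x => mulI x p) s I_ j).
Qed.

Lemma Rh_mul_list (s u : Rh M) (u' : list (MI M)) (p : MI M) :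
  proj1_sig u = u' ++ [p] ->
  proj1_sig (Rh_mul s u) = lm (u' ++ map (fun x => mulI x p) (proj1_sig s)).
Proof.
  intro Eu. cbn [Rh_mul proj1_sig]. unfold Rh_prod_list. rewrite Eu, last_last.
  rewrite (proj1 (Rh_shape s)) at 2. simpl map. rewrite <- app_assoc. reflexivity.
Qed.

(** Right multiplication by [u] shifts the meet position of [s] and [t] past
    [u] and translates its terms by the last term of [u]; the meet of [s·u]
    and [t·u] then lies L-below [(s ∧_L t)·p]. *)
Lemma meet_mul_r (s t u : Rh M) :
  exists p, leL (meetL (Rh_mul s u) (Rh_mul t u)) (mulI (meetL s t) p).
Proof.
  destruct (meet_index_max s t) as [[H1 [H2 [H3 H4]]] _].
  set (r := meet_index (proj1_sig s) (proj1_sig t)) in *.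
  assert (HU : proj1_sig u <> []) by (rewrite (proj1 (Rh_shape u)); discriminate).
  destruct (exists_last HU) as [u' [p Eu]]. exists p.
  assert (Hpred : meet_pred (u' ++ map (fun x => mulI x p) (proj1_sig s))
                            (u' ++ map (fun x => mulI x p) (proj1_sig t)) (length u' + r)).
  { split; [rewrite length_app, length_map; lia|].
    split; [rewrite length_app, length_map; lia|]. split.
    - intros j Hj. destruct (le_lt_dec (length u') j) as [Hle|Hlt].
      + replace j with (length u' + (j - length u')) by lia.
        rewrite !nth_translate by lia. f_equal. apply H3; lia.
      + rewrite !app_nth1 by exact Hlt. reflexivity.
    - rewrite !nth_translate by lia. apply eqL_mulr, H4. }
  destruct (lm_meet_pred _ _ _ Hpred) as [R' [HP HL]].
  rewrite <- (Rh_mul_list s u _ _ Eu), <- (Rh_mul_list t u _ _ Eu) in HP.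
  rewrite <- (Rh_mul_list s u _ _ Eu) in HL.
  rewrite nth_translate in HL by lia.
  destruct (meet_index_max (Rh_mul s u) (Rh_mul t u)) as [Hm Mm].
  eapply leL_trans; [|exact HL]. unfold meetL.
  apply schain_mono; [exact (proj2 (proj2_sig (Rh_mul s u))) | apply Mm, HP | apply Hm].
Qed.

End Meets.

(** * Part (i): [D] is a strict length function on [Rh(M^I)] *)

Section PartOne.
Context {M : Semigroup}.
Variable f : MI M -> nat.
Hypothesis hf : forall m m' m'' : MI M, f m <= f (mulI (mulI m' m) m'').

Lemma f_leL (x y : MI M) : leL x y -> f y <= f x.
Proof. intros [c ->]. pose proof (hf y c I_) as H. rewrite mulI_I_r in H. exact H. Qed.

Lemma f_eqL (x y : MI M) : eqL x y -> f x = f y.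
Proof. intros [H1 H2]. apply f_leL in H1. apply f_leL in H2. lia. Qed.

(** Every meet position of [s] and [t] carries an [f]-value at most that of
    the meet, which sits at the largest position, lowest in the chain. *)
Lemma f_meet_ge (s t : Rh M) (r : nat) :
  meet_pred (proj1_sig s) (proj1_sig t) r -> f (nth r (proj1_sig s) I_) <= f (meetL s t).
Proof.
  intro Hr. destruct (meet_index_max s t) as [Hm Mm]. apply f_leL, schain_mono.
  - exact (proj2 (proj2_sig s)).
  - apply Mm, Hr.
  - apply Hm.
Qed.

(** (L1) for meets: the meet index is symmetric and the two meets at it are
    L-equivalent. *)
Lemma f_meet_sym (s t : Rh M) : f (meetL s t) = f (meetL t s).
Proof.
  destruct (meet_index_max s t) as [P1 M1], (meet_index_max t s) as [P2 M2].
  assert (E : meet_index (proj1_sig s) (proj1_sig t) = meet_index (proj1_sig t) (proj1_sig s))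
    by (apply Nat.le_antisymm; [apply M2, meet_pred_sym, P1 | apply M1, meet_pred_sym, P2]).
  unfold meetL. rewrite <- E. apply f_eqL, (proj2 (proj2 (proj2 P1))).
Qed.

(** Ultrametric inequality: the shorter of the common prefixes of [s, t] and
    [t, u] is a common prefix of [s, u]. *)
Lemma f_meet_ultra (s t u : Rh M) :
  Nat.min (f (meetL s t)) (f (meetL t u)) <= f (meetL s u).
Proof.
  destruct (meet_index_max s t) as [[A1 [A2 [A3 A4]]] _].
  destruct (meet_index_max t u) as [[B1 [B2 [B3 B4]]] _].
  unfold meetL at 1 2.
  set (r1 := meet_index (proj1_sig s) (proj1_sig t)) in *.
  set (r2 := meet_index (proj1_sig t) (proj1_sig u)) in *.
  destruct (le_lt_dec r1 r2) as [Hle|Hlt].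
  - eapply Nat.le_trans; [apply Nat.le_min_l|]. apply f_meet_ge.
    split; [exact A1|]. split; [lia|]. split.
    + intros j Hj. rewrite A3 by lia. apply B3; lia.
    + destruct (Nat.eq_dec r1 r2) as [Heq|Hne].
      * rewrite Heq in A4 |- *. eapply eqL_trans; [exact A4 | exact B4].
      * rewrite <- (B3 r1) by lia. exact A4.
  - eapply Nat.le_trans; [apply Nat.le_min_r|]. rewrite <- (A3 r2 Hlt). apply f_meet_ge.
    split; [lia|]. split; [exact B2|]. split; [|rewrite (A3 r2 Hlt); exact B4].
    intros j Hj. rewrite A3 by lia. apply B3; lia.
Qed.

(** Axiom (L3) for meets: by [meet_mul_r] and the monotonicity of [f],
    [f (s·u ∧ t·u) >= f ((s ∧ t)·p) >= f (s ∧ t)]. *)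
Lemma f_meet_mul_r (s t u : Rh M) : f (meetL s t) <= f (meetL (Rh_mul s u) (Rh_mul t u)).
Proof.
  destruct (meet_mul_r s t u) as [p Hp].
  eapply Nat.le_trans; [|apply f_leL, Hp]. exact (hf (meetL s t) I_ p).
Qed.

Lemma Dfun_diag (s : Rh M) : Dfun f s s = succw (supw f).
Proof. unfold Dfun. rewrite dec_true by reflexivity. reflexivity. Qed.

Lemma Dfun_ne (s t : Rh M) : s <> t -> Dfun f s t = Fin (f (meetL s t)).
Proof. intro H. unfold Dfun. rewrite dec_false by exact H. reflexivity. Qed.

Lemma f_lt_top (x : MI M) : lew (Fin (S (f x))) (succw (supw f)).
Proof.
  assert (H : lew (Fin (f x)) (supw f))
    by (apply (proj1 (lubw_spec _)); exists x; reflexivity).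
  destruct (supw f); simpl in *; auto; lia.
Qed.

Lemma Dfun_le_top (s t : Rh M) : lew (Dfun f s t) (succw (supw f)).
Proof.
  destruct (classic (s = t)) as [<-|N].
  - rewrite Dfun_diag; apply lew_refl.
  - rewrite Dfun_ne by exact N.
    apply (lew_trans _ (Fin (S (f (meetL s t))))); [simpl; lia | apply f_lt_top].
Qed.

(** The diagonal value [1 + sup f] exceeds every off-diagonal
    value, which gives (L2) and (L5); (L1), (L3), (L4) come from the meet
    lemmas above, the diagonal cases being absorbed by the bound. *)
Theorem Dfun_strict_length_function : is_strict_length_function (@Rh_mul M) (Dfun f).
Proof.
  split; [split; [|split; [|split]]|].
  - intros s t. destruct (classic (s = t)) as [<-|N]; [reflexivity|].
    rewrite !Dfun_ne by auto. f_equal. apply f_meet_sym.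
  - intros m s t. rewrite Dfun_diag. apply Dfun_le_top.
  - intros u s t. destruct (classic (Rh_mul s u = Rh_mul t u)) as [E|N].
    + rewrite E, Dfun_diag. apply Dfun_le_top.
    + assert (N' : s <> t) by (intros ->; apply N; reflexivity).
      rewrite !Dfun_ne by assumption. apply f_meet_mul_r.
  - intros s t u. destruct (classic (s = u)) as [<-|N].
    + rewrite Dfun_diag. eapply lew_trans; [apply minw_le_l | apply Dfun_le_top].
    + destruct (classic (s = t)) as [<-|N1].
      * rewrite Dfun_diag. apply minw_le_r.
      * destruct (classic (t = u)) as [<-|N2].
        -- rewrite Dfun_diag. apply minw_le_l.
        -- rewrite !Dfun_ne by assumption. apply f_meet_ultra.
  - intros m s t H. apply NNPP; intro N.
    rewrite Dfun_ne in H by exact N. rewrite Dfun_diag in H.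
    pose proof (f_lt_top (meetL s t)) as T. rewrite <- H in T. simpl in T; lia.
Qed.

End PartOne.

Section RootedTrees.
Variable T : rtree.

Lemma depth0_root (v : vert T) : depth T v = 0 -> v = root T.
Proof. intro H. apply NNPP; intro N. rewrite (depth_par T N) in H. discriminate. Qed.

Lemma ray_depth (len : natw) (a : nat -> vert T) (i : nat) :
  is_ray T len a -> lew (Fin i) len -> depth T (a i) = i.
Proof.
  intros [H0 HS]. induction i as [|i IH]; intro Hi.
  - rewrite H0. apply depth_root.
  - destruct (HS i Hi) as [Hp Hn]. rewrite (depth_par T Hn), Hp, IH; [reflexivity|].
    eapply lew_Fin_le; [|exact Hi]. lia.
Qed.

Lemma ray_len_bound (len l : natw) (a : nat -> vert T) :
  (forall v, lew (Fin (depth T v)) len) -> is_ray T l a -> lew l len.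
Proof.
  intros Hbd Ha. destruct l as [l0|].
  - rewrite <- (ray_depth _ _ l0 Ha) by (simpl; lia). apply Hbd.
  - destruct len as [L|]; [|exact I].
    pose proof (Hbd (a (S L))) as H. rewrite (ray_depth _ _ (S L) Ha I) in H. simpl in H; lia.
Qed.

Lemma ray_splice (l0 : nat) (len : natw) (a b : nat -> vert T) :
  is_ray T (Fin l0) a -> is_ray T len b -> b l0 = a l0 ->
  is_ray T len (fun i => if i <=? l0 then a i else b i).
Proof.
  intros [Ha0 Ha] [_ Hb] Eab. split; [exact Ha0|]. intros i Hi.
  destruct (le_lt_dec (S i) l0) as [Hle|Hlt].
  - rewrite (proj2 (Nat.leb_le _ _) Hle), (proj2 (Nat.leb_le i l0)) by lia.
    apply Ha. exact Hle.
  - rewrite (proj2 (Nat.leb_gt (S i) l0) Hlt).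
    destruct (Nat.eq_dec i l0) as [->|Hne].
    + rewrite Nat.leb_refl, <- Eab. apply Hb, Hi.
    + rewrite (proj2 (Nat.leb_gt i l0)) by lia. apply Hb, Hi.
Qed.

(** If the tree has depth at most [len] and every vertex lies on a ray of
    length [len], then every maximal ray has length exactly [len]: a shorter
    one could be prolonged. *)
Lemma maxray_len (len : natw) :
  (forall v, lew (Fin (depth T v)) len) ->
  (forall v, exists b, is_ray T len b /\ b (depth T v) = v) ->
  forall l a, is_maxray T l a -> l = len.
Proof.
  intros Hbd Hext l a [Ha Hmax].
  pose proof (ray_len_bound _ _ _ Hbd Ha) as Hl.
  destruct l as [l0|]; [|destruct len; [contradiction | reflexivity]].
  destruct (classic (lew (Fin (S l0)) len)) as [Hs|Hns].
  - exfalso. destruct (Hext (a l0)) as [b [Hb Eb]].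
    rewrite (ray_depth _ _ l0 Ha) in Eb by (simpl; lia).
    pose proof (Hmax _ _ (ray_splice _ _ _ _ Ha Hb Eb)) as Hle.
    assert (Hlen : lew len (Fin l0)).
    { apply Hle. intros i Hi. simpl in Hi. rewrite (proj2 (Nat.leb_le _ _) Hi). reflexivity. }
    pose proof (lew_trans _ _ _ Hs Hlen) as C. simpl in C; lia.
  - destruct len as [L|]; [|exfalso; exact (Hns I)]. simpl in *. f_equal; lia.
Qed.

Lemma par_of_dist1 (u w : vert T) (k : nat) :
  depth T u = S k -> depth T w = k -> dist_le T u w 1 -> par T u = w.
Proof.
  intros Hu Hw [a [b [Hab E]]].
  destruct a as [|[|a]], b as [|[|b]]; try lia.
  - simpl in E. subst. lia.
  - simpl in E. exfalso. subst u.
    destruct (classic (w = root T)) as [->|N].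
    + rewrite par_root, depth_root in Hu. discriminate.
    + rewrite (depth_par T N) in Hw. lia.
  - exact E.
Qed.

End RootedTrees.

(** * Elliptic trees and their length functions

    In an elliptic [A]-tree, [alpha_i s] sits at depth [i], its parent is
    [alpha_(i-1) s], so agreement of [alpha s] and [alpha t] at depth [i]
    propagates upwards: [Fin i <= D_chi s t] iff [alpha_i s = alpha_i t]. *)

Section EllipticTrees.
Context {A : Type} {mul : A -> A -> A} {one : A}.
Variable chi : etree mul one.

Let act := et_act chi.
Let ray := et_ray chi.

(** The action preserves depth, so [alpha_i s] has depth [i]. *)
Lemma et_depth (i : nat) (s : A) :
  lew (Fin i) (et_len chi) -> depth (et_T chi) (act (ray i) s) = i.
Proof.
  intro Hi. unfold act. rewrite (et_act_depth chi s (ray i)).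
  apply (ray_depth _ _ _ i (proj1 (et_ray_max chi)) Hi).
Qed.

Lemma et_root (s : A) : act (ray 0) s = root (et_T chi).
Proof. apply depth0_root, et_depth, lew_0. Qed.

(** The action is a contraction, so it maps the edge [alpha_(i+1) alpha_i] to
    an edge; depths then force it to be a parent edge. *)
Lemma et_par (i : nat) (s : A) :
  lew (Fin (S i)) (et_len chi) -> par (et_T chi) (act (ray (S i)) s) = act (ray i) s.
Proof.
  intro Hi. assert (Hi' : lew (Fin i) (et_len chi)) by (eapply lew_Fin_le; [|exact Hi]; lia).
  apply (par_of_dist1 _ _ _ i); [apply et_depth, Hi | apply et_depth, Hi'|].
  apply (et_act_dist chi s).
  exists 1, 0. split; [lia|]. simpl. apply (proj2 (proj1 (et_ray_max chi)) i Hi).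
Qed.

Lemma et_agree_prefix (s t : A) (i : nat) :
  lew (Fin i) (et_len chi) -> act (ray i) s = act (ray i) t ->
  forall j, j <= i -> act (ray j) s = act (ray j) t.
Proof.
  induction i as [|i IH]; intros Hi E j Hj.
  - replace j with 0 by lia. exact E.
  - destruct (Nat.eq_dec j (S i)) as [->|Hne]; [exact E|].
    apply IH; [eapply lew_Fin_le; [|exact Hi]; lia | |lia].
    rewrite <- !(et_par i) by exact Hi. rewrite E. reflexivity.
Qed.

Lemma Dchi_spec (s t : A) (i : nat) :
  lew (Fin i) (Dchi chi s t) <->
  lew (Fin i) (et_len chi) /\ act (ray i) s = act (ray i) t.
Proof.
  unfold Dchi. rewrite lubw_down_closed.
  - split; [intros [H1 H2]; split; [exact H1 | apply H2; lia]|].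
    intros [H1 H2]; split; [exact H1 | apply et_agree_prefix; assumption].
  - split; [apply lew_0|]. intros j Hj. replace j with 0 by lia. rewrite !et_root. reflexivity.
  - intros j k Hkj [H1 H2]. split; [eapply lew_Fin_le; eassumption|]. intros l Hl; apply H2; lia.
Qed.

Lemma Dchi_diag (s : A) : Dchi chi s s = et_len chi.
Proof. apply natw_ext. intro i. rewrite Dchi_spec. tauto. Qed.

(** If [D_chi] is strict, [chi] is strongly faithful: agreement along the
    whole ray gives [D_chi s t = |alpha| = D_chi s s]. *)
Lemma strongly_faithful_of_strict :
  (forall m m' m'', Dchi chi m' m'' = Dchi chi m m -> m' = m'') -> strongly_faithful chi.
Proof.
  intros Hstrict s t Hall. apply (Hstrict s). rewrite Dchi_diag.
  apply natw_ext. intro i. rewrite Dchi_spec.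
  split; [tauto|]. intro Hi. split; [exact Hi | apply Hall, Hi].
Qed.

End EllipticTrees.

(** * The elliptic tree of a length function

    Let [D] be a length function on a monoid [A] and [top = D 1 1]; by (L2)
    [D s s = top] for all [s].  For [i <= top] the relation
    [close i s t := Fin i <= D s t] is an equivalence (L1, L4) compatible with
    right multiplication (L3).  The vertices of depth [i] are its classes,
    represented by a canonical element; the parent of the class of [s] at
    depth [i+1] is its class at depth [i], and [A] acts by right
    multiplication of representatives. *)

Section LengthFunctionTree.
Context {A : Type} {mul : A -> A -> A} {one : A} {D : A -> A -> natw}.
Hypothesis mul_assoc : forall x y z, mul (mul x y) z = mul x (mul y z).
Hypothesis mul_one_l : forall x, mul one x = x.
Hypothesis mul_one_r : forall x, mul x one = x.
Hypothesis D_length : is_length_function mul D.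

Definition top : natw := D one one.

Lemma D_le_top (s t : A) : lew (D s t) top.
Proof. apply (proj1 (proj2 D_length)). Qed.

Lemma D_diag (s : A) : D s s = top.
Proof. apply lew_antisym; [apply D_le_top | apply (proj1 (proj2 D_length))]. Qed.

Definition close (i : nat) (s t : A) : Prop := lew (Fin i) (D s t).

Lemma close_refl (i : nat) (s : A) : lew (Fin i) top -> close i s s.
Proof. unfold close. rewrite D_diag. auto. Qed.

Lemma close_sym (i : nat) (s t : A) : close i s t -> close i t s.
Proof. unfold close. rewrite (proj1 D_length). auto. Qed.

Lemma close_trans (i : nat) (s t u : A) : close i s t -> close i t u -> close i s u.
Proof.
  intros H1 H2. eapply lew_trans; [apply lew_minw; [exact H1 | exact H2]|].
  apply (proj2 (proj2 (proj2 D_length))).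
Qed.

Lemma close_mul_r (i : nat) (s t u : A) : close i s t -> close i (mul s u) (mul t u).
Proof. intro H. eapply lew_trans; [exact H | apply (proj1 (proj2 (proj2 D_length)))]. Qed.

Lemma close_le (i j : nat) (s t : A) : j <= i -> close i s t -> close j s t.
Proof. apply lew_Fin_le. Qed.

Lemma close_top {i : nat} {s t : A} (H : close i s t) : lew (Fin i) top.
Proof. eapply lew_trans; [exact H | apply D_le_top]. Qed.

Definition canon (i : nat) (s : A) : A := epsilon (inhabits one) (close i s).

Lemma canon_close (i : nat) (s : A) : lew (Fin i) top -> close i s (canon i s).
Proof. intro H. apply (epsilon_spec (inhabits one) (close i s)). exists s; apply close_refl, H. Qed.

Lemma canon_eq {i : nat} {s t : A} : close i s t -> canon i s = canon i t.
Proof.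
  intro H. unfold canon. f_equal. apply functional_extensionality. intro x.
  apply propositional_extensionality.
  split; eapply close_trans; eauto using close_sym.
Qed.

Record vertex : Type := Vertex {
  v_depth : nat;
  v_rep : A;
  v_depth_ok : lew (Fin v_depth) top;
  v_canon : v_rep = canon v_depth v_rep }.

Lemma vertex_eq (v w : vertex) : v_depth v = v_depth w -> v_rep v = v_rep w -> v = w.
Proof.
  destruct v as [i s H C], w as [j t H' C']; simpl. intros <- <-.
  rewrite (proof_irrelevance _ H H'), (proof_irrelevance _ C C'). reflexivity.
Qed.

Definition mkv {i : nat} (s : A) (H : lew (Fin i) top) : vertex :=
  Vertex i (canon i s) H (canon_eq (canon_close i s H)).

Lemma mkv_eq {i : nat} (s t : A) (H H' : lew (Fin i) top) :
  close i s t -> mkv s H = mkv t H'.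
Proof. intro E. apply vertex_eq; [reflexivity | apply canon_eq, E]. Qed.

Lemma mkv_inj {i : nat} {s t : A} {H H' : lew (Fin i) top} (E : mkv s H = mkv t H') :
  close i s t.
Proof.
  apply (f_equal v_rep) in E. simpl in E.
  eapply close_trans; [apply canon_close, H|]. rewrite E. apply close_sym, canon_close, H'.
Qed.

Lemma mkv_self (v : vertex) : mkv (v_rep v) (v_depth_ok v) = v.
Proof. apply vertex_eq; [reflexivity|]. symmetry; apply v_canon. Qed.

Definition vroot : vertex := mkv one (lew_0 top).

Definition vpar (v : vertex) : vertex :=
  mkv (v_rep v) (lew_Fin_le _ _ _ (Nat.le_pred_l _) (v_depth_ok v)).

Lemma vdepth0_root (v : vertex) : v_depth v = 0 -> v = vroot.
Proof.
  intro H0. apply vertex_eq; [exact H0|]. simpl. rewrite (v_canon v), H0.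
  apply canon_eq, lew_0.
Qed.

Lemma vpar_root : vpar vroot = vroot.
Proof. apply vdepth0_root. reflexivity. Qed.

Lemma vdepth_par (v : vertex) : v <> vroot -> v_depth v = S (v_depth (vpar v)).
Proof.
  intro N. simpl. destruct (v_depth v) eqn:E; [|reflexivity].
  exfalso; apply N, vdepth0_root, E.
Qed.

Definition class_tree : rtree := {| vert := vertex; root := vroot; par := vpar; depth := v_depth;
  par_root := vpar_root; depth_root := eq_refl; depth_par := vdepth_par |}.

Definition branch (s : A) (i : nat) : vertex :=
  match excluded_middle_informative (lew (Fin i) top) with
  | left H => mkv s H
  | right _ => vroot
  end.

Lemma branch_eq (s : A) {i : nat} (H : lew (Fin i) top) : branch s i = mkv s H.
Proof.
  unfold branch. destruct (excluded_middle_informative _) as [H'|N]; [|contradiction].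
  apply mkv_eq, close_refl, H.
Qed.

(** Each branch is a ray of length [top]: consecutive classes of [s] are
    parent and child. *)
Lemma branch_ray (s : A) : is_ray class_tree top (branch s).
Proof.
  split; [rewrite (branch_eq s (lew_0 _)); apply mkv_eq, lew_0|].
  intros i Hi. assert (Hi' : lew (Fin i) top) by (eapply lew_Fin_le; [|exact Hi]; lia).
  rewrite (branch_eq s Hi), (branch_eq s Hi'). split.
  - apply mkv_eq. simpl. apply close_sym, (close_le (S i) i); [lia | apply canon_close, Hi].
  - intro E. apply (f_equal v_depth) in E. discriminate.
Qed.

Lemma class_tree_depth_bound (v : vert class_tree) : lew (Fin (depth class_tree v)) top.
Proof. apply v_depth_ok. Qed.

(** Every vertex lies on the branch of its representative, so by
    [maxray_len] all maximal rays have length [top]. *)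
Lemma class_tree_uniform : uniform class_tree.
Proof.
  assert (Hext : forall v : vert class_tree,
             exists b, is_ray class_tree top b /\ b (depth class_tree v) = v)
    by (intro v; exists (branch (v_rep v)); split;
        [apply branch_ray | rewrite (branch_eq _ (v_depth_ok v)); apply mkv_self]).
  intros l1 a1 l2 a2 H1 H2.
  rewrite (maxray_len class_tree top class_tree_depth_bound Hext _ _ H1),
    (maxray_len class_tree top class_tree_depth_bound Hext _ _ H2).
  reflexivity.
Qed.

Lemma class_tree_maxray : is_maxray class_tree top (branch one).
Proof.
  split; [apply branch_ray|]. intros l a Ha _.
  exact (ray_len_bound class_tree top l a class_tree_depth_bound Ha).
Qed.

(** The right action of [A] on vertices: multiply the representative; by
    right compatibility of [close] this is well defined on classes and is a
    monoid action. *)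
Definition vact (v : vertex) (u : A) : vertex := mkv (mul (v_rep v) u) (v_depth_ok v).

Lemma vact_one (v : vertex) : vact v one = v.
Proof. unfold vact. rewrite mul_one_r. apply mkv_self. Qed.

Lemma vact_mul (v : vertex) (s t : A) : vact v (mul s t) = vact (vact v s) t.
Proof.
  apply mkv_eq. simpl. rewrite <- mul_assoc. apply close_mul_r, canon_close, v_depth_ok.
Qed.

(** The action preserves depth and commutes with taking parents, hence
    with iterated parents, so it does not increase distances. *)
Lemma vact_depth (s : A) : depth_pres class_tree class_tree (fun v => vact v s).
Proof. intro v. reflexivity. Qed.

Lemma vpar_vact (v : vertex) (s : A) : vpar (vact v s) = vact (vpar v) s.
Proof.
  apply mkv_eq. simpl. eapply close_trans.
  - apply close_sym, (close_le (v_depth v)); [lia | apply canon_close, v_depth_ok].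
  - apply close_mul_r, canon_close, (lew_Fin_le _ _ _ (Nat.le_pred_l _) (v_depth_ok v)).
Qed.

Lemma vact_dist (s : A) : dist_noninc class_tree class_tree (fun v => vact v s).
Proof.
  assert (Hiter : forall n v, Nat.iter n vpar (vact v s) = vact (Nat.iter n vpar v) s)
    by (induction n as [|n IH]; intro v; [reflexivity | simpl; rewrite IH; apply vpar_vact]).
  intros u v n [a [b [Hab E]]]. exists a, b; split; [exact Hab|].
  simpl. rewrite !Hiter. simpl in E. rewrite E. reflexivity.
Qed.

Lemma vact_branch {i : nat} {s : A} (H : lew (Fin i) top) : vact (branch one i) s = mkv s H.
Proof.
  rewrite (branch_eq one H). apply mkv_eq. simpl. rewrite <- (mul_one_l s) at 2.
  apply close_mul_r, close_sym, canon_close, H.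
Qed.

Lemma vertex_cover (v : vertex) :
  exists i s, lew (Fin i) top /\ v = vact (branch one i) s.
Proof.
  exists (v_depth v), (v_rep v). split; [exact (v_depth_ok v)|].
  rewrite (vact_branch (v_depth_ok v)). symmetry; apply mkv_self.
Qed.

Definition length_tree : etree mul one :=
  Build_etree mul one class_tree_uniform class_tree_maxray vact vact_one vact_mul
    vact_depth vact_dist vertex_cover.

(** Its length function is [D]: [alpha_i s = alpha_i t] iff [s], [t] are in
    the same class at depth [i], iff [Fin i <= D s t]. *)
Lemma Dchi_length_tree (s t : A) : Dchi length_tree s t = D s t.
Proof.
  apply natw_ext. intro i. rewrite (Dchi_spec length_tree). simpl. split.
  - intros [Hi E]. rewrite !(vact_branch Hi) in E. exact (mkv_inj E).
  - intro Hst. pose proof (close_top Hst) as Hi. split; [exact Hi|].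
    rewrite !(vact_branch Hi). apply mkv_eq, Hst.
Qed.

(** Uniqueness: in an elliptic tree [chi'] with [D_chi' = D], the vertex
    [alpha_i s] depends only on the class of [s] at depth [i], and
    [v |-> alpha_(depth v) (rep v)] is an isomorphism. *)
Section Uniqueness.
Variable chi' : etree mul one.
Hypothesis HD : forall s t, D s t = Dchi chi' s t.

Let act := et_act chi'.
Let ray := et_ray chi'.

Lemma et_len_top : et_len chi' = top.
Proof. unfold top. rewrite HD. symmetry. apply Dchi_diag. Qed.

Lemma close_agree {i : nat} {s t : A} (Hi : lew (Fin i) top) :
  close i s t <-> act (ray i) s = act (ray i) t.
Proof.
  unfold close. rewrite HD, Dchi_spec, et_len_top. tauto.
Qed.

Definition class_iso (v : vertex) : vert (et_T chi') := act (ray (v_depth v)) (v_rep v).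

Lemma class_iso_mkv (i : nat) (s : A) (H : lew (Fin i) top) :
  class_iso (mkv s H) = act (ray i) s.
Proof. apply (close_agree H), close_sym, canon_close, H. Qed.

Lemma class_iso_par (v : vertex) : class_iso (vpar v) = par (et_T chi') (class_iso v).
Proof.
  unfold vpar. rewrite class_iso_mkv. unfold class_iso.
  destruct (v_depth v) as [|k] eqn:Ev; simpl.
  - unfold act, ray. rewrite et_root, par_root. reflexivity.
  - symmetry. apply et_par. rewrite et_len_top, <- Ev. apply v_depth_ok.
Qed.

Lemma class_iso_depth (v : vertex) : depth (et_T chi') (class_iso v) = v_depth v.
Proof. apply et_depth. rewrite et_len_top. apply v_depth_ok. Qed.

(** [class_iso] is injective by [close_agree], surjective because [chi']
    is spanned by [alpha], and depth-preserving, distance-non-increasing,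
    ray-preserving and equivariant by the lemmas above. *)
Lemma length_tree_unique : etree_iso length_tree chi'.
Proof.
  assert (Hiter : forall n v,
             Nat.iter n (par (et_T chi')) (class_iso v) = class_iso (Nat.iter n vpar v))
    by (induction n as [|n IH]; intro v;
        [reflexivity | simpl; rewrite IH, class_iso_par; reflexivity]).
  exists class_iso. split; [|split; [|split; [|split; [|split]]]].
  - intros v w E. change vertex in v, w.
    assert (Hd : v_depth v = v_depth w) by (rewrite <- !class_iso_depth, E; reflexivity).
    apply vertex_eq; [exact Hd|]. rewrite (v_canon v), (v_canon w), <- Hd. apply canon_eq.
    apply (close_agree (v_depth_ok v)). unfold class_iso in E. rewrite Hd in E |- *. exact E.
  - intro y. destruct (et_vert chi' y) as [i [s [Hi ->]]]. rewrite et_len_top in Hi.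
    exists (mkv s Hi). apply class_iso_mkv.
  - intro v. apply class_iso_depth.
  - intros u v n [a [b [Hab E]]]. exists a, b; split; [exact Hab|].
    rewrite !Hiter. f_equal. exact E.
  - intros i Hi. simpl in Hi |- *. rewrite (branch_eq one Hi), class_iso_mkv. apply et_act_one.
  - intros v s. change (class_iso (vact v s) = act (class_iso v) s).
    unfold vact. rewrite class_iso_mkv. unfold class_iso, act. apply et_act_mul.
Qed.

End Uniqueness.

End LengthFunctionTree.

Theorem theorem6p1 (M : Semigroup) (f : MI M -> nat)
  (hf0 : f I_ = 0)
  (hf : forall m m' m'' : MI M, f m <= f (mulI (mulI m' m) m'')) :
  is_strict_length_function (@Rh_mul M) (Dfun f) /\
  exists chi : etree (@Rh_mul M) (@Rh_one M),
    strongly_faithful chi /\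
    (forall s t, Dfun f s t = Dchi chi s t) /\
    (forall chi' : etree (@Rh_mul M) (@Rh_one M),
        (forall s t, Dfun f s t = Dchi chi' s t) -> etree_iso chi chi').
Proof.
  destruct (Dfun_strict_length_function f hf) as [Hlen Hstrict].
  set (chi := length_tree Rh_mul_assoc Rh_mul_one_l Rh_mul_one_r Hlen).
  assert (HD : forall s t, Dfun f s t = Dchi chi s t)
    by (intros s t; symmetry; apply Dchi_length_tree).
  split; [exact (conj Hlen Hstrict)|]. exists chi. split; [|split; [exact HD|]].
  - apply strongly_faithful_of_strict. intros m s t. rewrite <- !HD. apply Hstrict.
  - intros chi' HD'. apply length_tree_unique, HD'.
Qed.
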